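(* Let $\mathcal{D}$ be a dictionary over a finite alphabet $\mathscr{A}$ with GAP-graphs $(\mathscr{G}_k)_{k\in\mathbb{N}}$. If $\mathscr{G}_{k_0}$ is strongly connected for some $k_0\in\mathbb{N}$, then $\mathscr{G}_k$ is strongly connected for every $k\leq k_0$. In particular, if $\mathscr{G}_{l_0}$ is not strongly connected, then $\mathscr{G}_l$ is not strongly connected for every $l\geq l_0$.
   Context: A dictionary is a non-empty set $\mathcal{D}$ of finite words over $\mathscr{A}$ containing the empty word, closed under taking subwords, and such that for each $u\in\mathcal{D}$ there are letters $a,b$ with $aub\in\mathcal{D}$. The GAP-graph $\mathscr{G}_k$ is the oriented graph with vertex set $\mathcal{D}\cap\mathscr{A}^k$, edge set $\mathcal{D}\cap\mathscr{A}^{k+1}$, the edge $a_0\cdots a_k$ going from $a_0\cdots a_{k-1}$ to $a_1\cdots a_k$. A path is a sequence of edges with the end of each equal to the origin of the next; an oriented graph is strongly connected if for any two vertices $u,v$ there are paths from $u$ to $v$ and from $v$ to $u$. *)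

From mathcomp Require Import all_boot.
Set Implicit Arguments. Unset Strict Implicit. Unset Printing Implicit Defensive.

Section Dict.
Variable A : finType.

Definition subword (u w : seq A) : Prop := exists p s, w = p ++ u ++ s.

Definition dictionary (D : seq A -> Prop) : Prop :=
  [/\ D [::],
      (forall w u, D w -> subword u w -> D u) &
      (forall u, D u -> exists a b : A, D (a :: rcons u b))].

(* GAP-graph G_k: vertices = words of D of length k, edges = words of D of length k+1;
   the edge a_0..a_k goes from a_0..a_{k-1} (= take k e) to a_1..a_k (= drop 1 e). *)
Definition gap_vertex (D : seq A -> Prop) (k : nat) (u : seq A) : Prop :=
  D u /\ size u = k.
Definition gap_edge (D : seq A -> Prop) (k : nat) (e : seq A) : Prop :=
  D e /\ size e = k.+1.
Definition edge_origin (k : nat) (e : seq A) : seq A := take k e.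
Definition edge_end (e : seq A) : seq A := drop 1 e.

Fixpoint gap_path (D : seq A -> Prop) (k : nat) (u : seq A) (es : seq (seq A)) (v : seq A)
  : Prop :=
  match es with
  | [::] => u = v
  | e :: es' => gap_edge D k e /\ edge_origin k e = u /\ gap_path D k (edge_end e) es' v
  end.

Definition strongly_connected (D : seq A -> Prop) (k : nat) : Prop :=
  forall u v, gap_vertex D k u -> gap_vertex D k v -> exists es, gap_path D k u es v.

End Dict.

From mathcomp Require Import all_boot.

Set Implicit Arguments.
Unset Strict Implicit.
Unset Printing Implicit Defensive.

(* Deleting the first letter is a graph morphism from G_(k+1) to G_k: the edge
   a_0 ... a_(k+1) goes to its factor a_1 ... a_(k+1), and origins and ends are
   mapped accordingly.  It is onto on vertices because every word of the
   dictionary extends to the left, so a path between two lifts in G_(k+1)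
   projects to a path in G_k. *)

Lemma subword_drop (A : finType) n (w : seq A) : subword (drop n w) w.
Proof. by exists (take n w), [::]; rewrite cats0 cat_take_drop. Qed.

Lemma subword_take (A : finType) n (w : seq A) : subword (take n w) w.
Proof. by exists [::], (drop n w); rewrite cat_take_drop. Qed.

Lemma dictionary_extl (A : finType) (D : seq A -> Prop) :
  dictionary D -> forall u, D u -> exists a, D (a :: u).
Proof.
case=> _ D_factor D_ext u /D_ext [a [b Dab]]; exists a.
apply: D_factor Dab _; have := subword_take (size u).+1 (a :: rcons u b).
by rewrite /= -cats1 take_size_cat.
Qed.

Section Projection.
Variables (A : finType) (D : seq A -> Prop).
Hypothesis D_factor : forall w u, D w -> subword u w -> D u.
Hypothesis D_extl : forall u, D u -> exists a, D (a :: u).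

Lemma gap_edge_drop1 k e : gap_edge D k.+1 e -> gap_edge D k (drop 1 e).
Proof.
case=> De size_e; split; first exact: D_factor De (subword_drop 1 e).
by rewrite size_drop size_e subn1.
Qed.

Lemma edge_origin_drop1 k (e : seq A) :
  edge_origin k (drop 1 e) = drop 1 (edge_origin k.+1 e).
Proof. by rewrite /edge_origin take_drop addn1. Qed.

Lemma gap_path_drop1 k u es v :
  gap_path D k.+1 u es v -> gap_path D k (drop 1 u) (map (drop 1) es) (drop 1 v).
Proof.
elim: es u => [|e es IH] u /=; first by move->.
case=> /gap_edge_drop1 edge_e [origin_e /IH path_es].
by rewrite edge_origin_drop1 origin_e.
Qed.

Lemma gap_vertex_lift k u :
  gap_vertex D k u -> exists a, gap_vertex D k.+1 (a :: u).
Proof. by case=> /D_extl [a Dau] size_u; exists a; split; rewrite //= size_u. Qed.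

Lemma strongly_connected_pred k :
  strongly_connected D k.+1 -> strongly_connected D k.
Proof.
move=> sc u v /gap_vertex_lift [a Vau] /gap_vertex_lift [b Vbv].
have [es /gap_path_drop1] := sc _ _ Vau Vbv.
by rewrite /= !drop0; exists (map (drop 1) es).
Qed.

Lemma strongly_connected_leq k k0 :
  k <= k0 -> strongly_connected D k0 -> strongly_connected D k.
Proof.
move/subnK <-; elim: (k0 - k) => [|n IH] sc; first by rewrite add0n in sc.
by apply/IH/strongly_connected_pred; rewrite -addSn.
Qed.

End Projection.

Theorem proposition7 (A : finType) (D : seq A -> Prop) :
  dictionary D ->
  (forall k0 : nat, strongly_connected D k0 ->
     forall k : nat, k <= k0 -> strongly_connected D k) /\
  (forall l0 : nat, ~ strongly_connected D l0 ->
     forall l : nat, l0 <= l -> ~ strongly_connected D l).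
Proof.
move=> dictD; have D_extl := dictionary_extl dictD.
have [_ D_factor _] := dictD.
have sc_leq := strongly_connected_leq D_factor D_extl.
split=> [k0 sc k le_k_k0 | l0 not_sc l le_l0_l sc]; first exact: sc_leq sc.
exact/not_sc/(sc_leq _ _ le_l0_l).
Qed.
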